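(* Let $R$ be a quotient root system with base $S$, let $\Phi \subseteq R^+$, and let $I, J \in \mathrm{Gen}(\Phi)$. Then $I \cup J \in \mathrm{Gen}(\Phi)$ and $I \cap J \in \mathrm{Gen}(\Phi)$.
   Context: A quotient root system (QRS) $R$ is the set of non-zero images of a root system $\Delta$ (with base $\Sigma$) under the orthogonal projection of its ambient Euclidean space onto $(\mathrm{span}\,J_0)^\perp$ for some $J_0\subsetneq\Sigma$; its base $S$ consists of the images of $\Sigma\setminus J_0$, and every root is an integer combination of $S$ with all coefficients $\ge0$ (positive roots, $R^+$) or all $\le0$. For $K \subseteq S$: $R_K = R\cap\mathrm{span}\,K$, $R_K^+=R_K\cap R^+$; $\pi_K$ is orthogonal projection onto $(\mathrm{span}\,K)^\perp$, $R/K$ is the set of non-zero elements of $\pi_K(R)$ and $(R/K)^+=\pi_K(R^+)\setminus\{0\}$. Inflation: for $\Psi\subseteq(R/K)^+$, $X\subseteq R_K^+$, $\inf_K^S(\Psi,X):=\{\alpha\in R^+:\pi_K(\alpha)\in\Psi\}\cup X$. $\mathrm{Gen}(\Phi) := \{K\subseteq S : \Phi=\inf_K^S(\Theta,Y)\text{ for some }\Theta\subseteq (R/K)^+,\ Y\subseteq R_K^+\}$. *)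

From HB Require Import structures.
From mathcomp Require Import all_boot all_order all_algebra.
From mathcomp Require Import finmap.
From Stdlib Require Import ClassicalEpsilon.
Set Implicit Arguments. Unset Strict Implicit. Unset Printing Implicit Defensive.
Import Order.TTheory GRing.Theory Num.Theory.
Local Open Scope ring_scope.
Local Open Scope fset_scope.

Section QRS.
Variables (R : realFieldType) (n : nat).
Notation V := 'rV[R]_n.

Definition dot (u v : V) : R := (u *m v^T) 0 0.

Definition refl (a v : V) : V := v - (2 * dot v a / dot a a) *: a.

Definition is_intR (x : R) : Prop := exists z : int, x = z%:~R.

Definition in_span (W : {fset V}) (v : V) : Prop :=
  exists c : V -> R, v = \sum_(w <- W) c w *: w.

Definition lin_indep (W : {fset V}) : Prop :=
  forall c : V -> R, \sum_(w <- W) c w *: w = 0 -> forall w, w \in W -> c w = 0.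

Definition is_orthproj (W : {fset V}) (v p : V) : Prop :=
  in_span W (v - p) /\ forall w, w \in W -> dot p w = 0.
Definition orthproj (W : {fset V}) (v : V) : V :=
  epsilon (inhabits (0 : V)) (is_orthproj W v).

Definition is_root_system (D : {fset V}) : Prop :=
  [/\ (0 : V) \notin D,
      forall a b, a \in D -> b \in D -> refl a b \in D,
      forall a b, a \in D -> b \in D -> is_intR (2 * dot b a / dot a a)
    & forall a (c : R), a \in D -> c *: a \in D -> c = 1 \/ c = -1].

Definition nonneg_int_comb (W : {fset V}) (v : V) : Prop :=
  exists c : V -> int, v = \sum_(w <- W) (c w)%:~R *: w /\
                       forall w, w \in W -> (0 <= c w)%R.
Definition nonpos_int_comb (W : {fset V}) (v : V) : Prop :=
  exists c : V -> int, v = \sum_(w <- W) (c w)%:~R *: w /\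
                       forall w, w \in W -> (c w <= 0)%R.

Definition is_base (D Sig : {fset V}) : Prop :=
  [/\ Sig `<=` D, lin_indep Sig &
      forall a, a \in D -> nonneg_int_comb Sig a \/ nonpos_int_comb Sig a].

(* The quotient root system R determined by (D, Sig, J0) *)
Variables (D Sig J0 : {fset V}).

Definition qbase : {fset V} := [fset orthproj J0 s | s in Sig `\` J0].

Definition qroot (v : V) : Prop :=
  v != 0 /\ exists a, a \in D /\ v = orthproj J0 a.

Definition qpos (v : V) : Prop := qroot v /\ nonneg_int_comb qbase v.

Definition qpos_K (K : {fset V}) (v : V) : Prop := qpos v /\ in_span K v.

Definition quot_pos (K : {fset V}) (v : V) : Prop :=
  v != 0 /\ exists a, qpos a /\ v = orthproj K a.

Definition inflation (K : {fset V}) (Psi X : V -> Prop) (v : V) : Prop :=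
  (qpos v /\ Psi (orthproj K v)) \/ X v.

Definition in_Gen (Phi : V -> Prop) (K : {fset V}) : Prop :=
  K `<=` qbase /\
  exists (Theta Y : V -> Prop),
    (forall v, Theta v -> quot_pos K v) /\
    (forall v, Y v -> qpos_K K v) /\
    (forall v, Phi v <-> inflation K Theta Y v).

End QRS.

From HB Require Import structures.
From mathcomp Require Import all_boot all_order all_algebra.
From mathcomp Require Import finmap.
From mathcomp Require Import zify lra.
From Stdlib Require Import ClassicalEpsilon.
Set Implicit Arguments. Unset Strict Implicit. Unset Printing Implicit Defensive.
Import Order.TTheory GRing.Theory Num.Theory.
Local Open Scope fset_scope.
Local Open Scope ring_scope.

(* [K] lies in [Gen Phi] exactly when, off [span K], [Phi] is a union of nonzero
   fibres of the projection along [K] ([in_GenE]).  For [I `&` J]: a vector with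
   nonzero image modulo [I `&` J] has nonzero image modulo [I] or modulo [J],
   because [span I :&: span J = span (I `&` J)] inside a basis.  For [I `|` J]:
   two positive roots with the same nonzero image modulo [I `|` J] lift to roots
   of [D] in one coset [a + span L], where [L] are the simple roots of [D] lying
   in [J0] or over [I `|` J].  Any two roots of such a coset are joined by a chain
   of roots whose consecutive differences are simple roots of [L] (the usual
   root-string argument), and each link preserves [Phi]: a root of [J0] is
   invisible in the quotient, and one over [I] (resp. [J]) keeps the image
   modulo [I] (resp. [J]). *)

Section InnerProduct.
Variables (R : realFieldType) (n : nat).
Local Notation V := 'rV[R]_n.

Lemma dotE (u v : V) : dot u v = \sum_j u 0 j * v 0 j.
Proof. by rewrite /dot !mxE; apply: eq_bigr => j _; rewrite !mxE. Qed.

Lemma dotC (u v : V) : dot u v = dot v u.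
Proof. by rewrite !dotE; apply: eq_bigr => j _; rewrite mulrC. Qed.

Lemma dot_is_linear (u : V) : linear_for *%R (dot u).
Proof.
move=> a v w; rewrite !dotE mulr_sumr -big_split; apply: eq_bigr => j _.
by rewrite !mxE mulrDr mulrCA.
Qed.

HB.instance Definition _ (u : V) :=
  GRing.isLinear.Build R V R _ (dot u) (dot_is_linear u).

Lemma dotBl (u v w : V) : dot (u - v) w = dot u w - dot v w.
Proof. by rewrite dotC linearB /= !(dotC w). Qed.

Lemma dotZl a (u w : V) : dot (a *: u) w = a * dot u w.
Proof. by rewrite dotC linearZ dotC. Qed.

Lemma dot_suml I (r : seq I) (F : I -> V) w :
  dot (\sum_(i <- r) F i) w = \sum_(i <- r) dot (F i) w.
Proof. by rewrite dotC linear_sum; apply: eq_bigr => i _; rewrite dotC. Qed.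

Lemma dot_ge0 (u : V) : 0 <= dot u u.
Proof. by rewrite dotE; apply: sumr_ge0 => j _; rewrite -expr2 sqr_ge0. Qed.

Lemma dot_eq0 (u : V) : (dot u u == 0) = (u == 0).
Proof.
apply/eqP/eqP => [|->]; last by rewrite linear0.
have sq_ge0 i : true -> 0 <= u 0 i * u 0 i by rewrite -expr2 sqr_ge0.
rewrite dotE => /(psumr_eq0P sq_ge0) u0; apply/rowP => j; rewrite mxE.
by apply/eqP; rewrite -[_ == _]orbb -mulf_eq0 u0.
Qed.

Lemma dot_gt0 (u : V) : (0 < dot u u) = (u != 0).
Proof. by rewrite lt_def dot_ge0 dot_eq0 andbT. Qed.

(* [0 < dot x x] is the sum of the [e w * dot w x]. *)
Lemma coord_dot_gt0 (W : seq V) (e : V -> R) x : x != 0 ->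
  x = \sum_(w <- W) e w *: w -> exists2 s, s \in W & 0 < e s * dot s x.
Proof.
move=> x0 Ex; apply/hasP; apply: contraTT (x0) => /hasPn W_le0.
rewrite -dot_gt0 -leNgt {1}Ex dot_suml big_seq sumr_le0 // => w /W_le0.
by rewrite dotZl leNgt.
Qed.

End InnerProduct.

Section Span.
Variables (R : realFieldType) (n : nat).
Local Notation V := 'rV[R]_n.

Lemma in_spanE (W : {fset V}) v : in_span W v <-> v \in <<W>>%VS.
Proof.
split=> [[c ->]|vW].
  by rewrite big_seq; apply: memv_suml => w wW; rewrite memvZ ?memv_span.
exists (fun w => oapp (fun i => coord (in_tuple W) i v) 0 (insub (index w W))).
rewrite {1}(coord_span (X := in_tuple W) vW) (big_nth 0) big_mkord; apply: eq_bigr => i _.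
by rewrite index_uniq ?fset_uniq // valK.
Qed.

Lemma sum_delta (W : seq V) s : uniq W -> s \in W ->
  \sum_(w <- W) ((w == s)%:R : R) *: w = s.
Proof.
move=> Wu sW; rewrite (bigD1_seq s) //= eqxx scale1r big1 ?addr0 // => w.
by move=> /negbTE ->; rewrite scale0r.
Qed.

Lemma sum_extend_fsubset (A W : {fset V}) (c : V -> R) : A `<=` W ->
  \sum_(w <- A) c w *: w = \sum_(w <- W) (if w \in A then c w else 0) *: w.
Proof.
move=> AW; rewrite [LHS]big_seq_cond (eq_bigr (fun w => (if w \in A then c w else 0) *: w)).
  by rewrite -big_seq_cond; apply: big_fset_incl => // w _ /negbTE ->; rewrite scale0r.
by move=> w /andP[-> _].
Qed.

Section LinIndep.
Variable W : {fset V}.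
Hypothesis W_indep : lin_indep W.

Lemma lin_indep_coord (c d : V -> R) :
  \sum_(w <- W) c w *: w = \sum_(w <- W) d w *: w -> {in W, c =1 d}.
Proof.
move=> E w wW; apply/eqP; rewrite -subr_eq0; apply/eqP.
apply: (W_indep (c := fun w => c w - d w)) => //.
by rewrite (eq_bigr _ (fun w _ => scalerBl _ _ _)) sumrB E subrr.
Qed.

Lemma lin_indep_coord_notin (A : {fset V}) (c : V -> R) x : A `<=` W ->
  x \in <<A>>%VS -> x = \sum_(w <- W) c w *: w -> forall s, s \in W -> s \notin A -> c s = 0.
Proof.
move=> AW /in_spanE[d Ex] Ex' s sW sA.
have := lin_indep_coord (etrans (esym Ex') (etrans Ex (sum_extend_fsubset _ AW))) sW.
by rewrite (negbTE sA).
Qed.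

Lemma span_fsetI (I J : {fset V}) x : I `<=` W -> J `<=` W ->
  x \in <<I>>%VS -> x \in <<J>>%VS -> x \in <<I `&` J>>%VS.
Proof.
move=> IW JW /in_spanE[c Exc] /in_spanE[d Exd].
rewrite (sum_extend_fsubset _ IW) in Exc; rewrite (sum_extend_fsubset _ JW) in Exd.
have cd := lin_indep_coord (etrans (esym Exc) Exd).
apply/in_spanE; exists c; rewrite Exc (sum_extend_fsubset _ (fsubset_trans (fsubsetIl I J) IW)).
apply: eq_big_seq => w wW; rewrite in_fsetI; case: ifP => //= wI; case: ifP => // /negbT wJ.
by have := cd w wW; rewrite wI (negbTE wJ) => ->.
Qed.

End LinIndep.

Section IntCoord.
Variable W : {fset V}.

Lemma sum_intrB (c d : V -> int) :
  \sum_(w <- W) (c w)%:~R *: w - \sum_(w <- W) (d w)%:~R *: w =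
  \sum_(w <- W) (c w - d w)%:~R *: w.
Proof. by rewrite -sumrB; apply: eq_bigr => w _; rewrite -scalerBl -rmorphB. Qed.

Lemma sum_intrB_delta (e : V -> int) s : s \in W ->
  \sum_(w <- W) (e w - (w == s)%:R)%:~R *: w = \sum_(w <- W) (e w)%:~R *: w - s.
Proof.
move=> sW; rewrite -[X in _ = _ - X](sum_delta (fset_uniq W) sW) -sumrB.
by apply: eq_bigr => w _; rewrite rmorphB /= rmorph_nat scalerBl.
Qed.

Lemma sum_abszB_delta (e : V -> int) s : s \in W -> 0 < e s ->
  (\sum_(w <- W) `|e w - (w == s)%:R|%N).+1 = \sum_(w <- W) `|e w|%N.
Proof.
move=> sW es; rewrite !(bigD1_seq s) ?fset_uniq //= eqxx -addSn.
congr (_ + _)%N; first by lia.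
by apply: eq_bigr => w /negbTE ->; rewrite subr0.
Qed.

End IntCoord.

End Span.

Section OrthProj.
Variables (R : realFieldType) (n : nat).
Local Notation V := 'rV[R]_n.
Implicit Types W : {fset V}.

Lemma dot_span_eq0 (s : seq V) p x :
  {in s, forall w, dot p w = 0} -> x \in <<s>>%VS -> dot p x = 0.
Proof.
move=> ps /(coord_span (X := in_tuple s)) ->; rewrite linear_sum big1 // => i _.
by rewrite linearZ /= ps ?mulr0 // mem_nth.
Qed.

Lemma orthproj_exists (s : seq V) v :
  exists p, v - p \in <<s>>%VS /\ {in s, forall w, dot p w = 0}.
Proof.
elim: s v => [|w s IH] v; first by exists v; rewrite subrr mem0v.
have [p [vp ps]] := IH v; have [q [wq qs]] := IH w.
have sub_ws : (<<s>> <= <<w :: s>>)%VS by apply: sub_span => u us; rewrite inE us orbT.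
have w_ws : w \in <<w :: s>>%VS by rewrite memv_span ?mem_head.
have [q0|q_neq0] := eqVneq q 0.
  exists p; split; first exact: (subvP sub_ws).
  move=> u; rewrite inE => /predU1P[->|]; last exact: ps.
  by apply: (dot_span_eq0 ps); rewrite -[w]subr0 -q0.
(* Gram-Schmidt: remove from [p] its component along [q], the part of [w] orthogonal to [s]. *)
pose t := dot p q / dot q q.
have pts : {in s, forall u, dot (p - t *: q) u = 0}.
  by move=> u us; rewrite dotBl dotZl ps // qs // mulr0 subrr.
exists (p - t *: q); split.
  have -> : v - (p - t *: q) = (v - p) + t *: (w - (w - q)).
    by rewrite subKr opprB addrCA addrC.
  apply: memvD; first exact: (subvP sub_ws).
  by apply/memvZ/memvB => //; apply: (subvP sub_ws).
move=> u; rewrite inE => /predU1P[->|]; last exact: pts.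
rewrite -[w](subrK q) linearD /= (dot_span_eq0 pts wq) add0r dotBl dotZl /t.
by rewrite mulfVK ?subrr // gt_eqF ?dot_gt0.
Qed.

Lemma is_orthprojE W v p :
  is_orthproj W v p <-> v - p \in <<W>>%VS /\ {in W, forall w, dot p w = 0}.
Proof. by split=> -[vp pW]; split=> //; apply/in_spanE. Qed.

Lemma orthprojP W v : is_orthproj W v (orthproj W v).
Proof.
apply: epsilon_spec; have [p vp] := orthproj_exists W v.
by exists p; apply/is_orthprojE.
Qed.

Lemma orthproj_unique W v p : is_orthproj W v p -> orthproj W v = p.
Proof.
move=> /is_orthprojE[vp pW]; have /is_orthprojE[vq qW] := orthprojP W v.
have qp : orthproj W v - p \in <<W>>%VS.
  by rewrite -(subrKA v) addrC -opprB memvB.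
apply/eqP; rewrite -subr_eq0 -dot_eq0 dotBl.
by rewrite (dot_span_eq0 qW qp) (dot_span_eq0 pW qp) subrr.
Qed.

Lemma orthproj_residual W v : v - orthproj W v \in <<W>>%VS.
Proof. by have /is_orthprojE[] := orthprojP W v. Qed.

Lemma dot_orthproj W v w : w \in W -> dot (orthproj W v) w = 0.
Proof. by have /is_orthprojE[_] := orthprojP W v; apply. Qed.

Lemma orthproj_is_linear W : linear (orthproj W).
Proof.
move=> a u v; apply: orthproj_unique; apply/is_orthprojE; split.
  rewrite opprD addrACA -scalerBr.
  by rewrite memvD ?memvZ ?orthproj_residual.
by move=> w wW; rewrite dotC linearD linearZ /= !(dotC w) !dot_orthproj // mulr0 addr0.
Qed.

HB.instance Definition _ W :=
  GRing.isLinear.Build R V V _ (orthproj W) (orthproj_is_linear W).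

Lemma orthproj_eq0 W x : (orthproj W x == 0) = (x \in <<W>>%VS).
Proof.
apply/eqP/idP => [px0|xW]; first by rewrite -[x]subr0 -px0 orthproj_residual.
apply: orthproj_unique; apply/is_orthprojE; rewrite subr0.
by split=> // w _; rewrite dotC linear0.
Qed.

Lemma orthproj_eq W u v : (orthproj W u == orthproj W v) = (u - v \in <<W>>%VS).
Proof. by rewrite -subr_eq0 -linearB orthproj_eq0. Qed.

Lemma orthproj_eq0_sub K W x : K `<=` W -> orthproj K x = 0 -> orthproj W x = 0.
Proof.
move=> KW /eqP; rewrite !orthproj_eq0 => xK; apply/eqP; rewrite orthproj_eq0.
by apply: subvP xK; apply/sub_span/fsubsetP.
Qed.

End OrthProj.

Section RootSystem.
Variables (R : realFieldType) (n : nat) (D : {fset 'rV[R]_n}).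
Hypothesis HD : is_root_system D.

Lemma root_neq0 a : a \in D -> a != 0.
Proof. by case: HD => D0 _ _ _ aD; apply: contraNneq D0 => <-. Qed.

Lemma rootN a : a \in D -> - a \in D.
Proof.
move=> aD; case: HD => _ reflD _ _; have := reflD a a aD aD.
by rewrite /refl mulfK ?gt_eqF ?dot_gt0 ?root_neq0 // scaler_nat mulr2n opprD addNKr.
Qed.

Lemma intr_gt0_cases (x : R) : is_intR x -> 0 < x -> x = 1 \/ 2 <= x.
Proof.
move=> [z ->]; rewrite ltr0z => z_gt0.
have [->|z_ge2] : z = 1 \/ 2 <= z by lia.
  by left.
by right; rewrite (ler_int R 2 z).
Qed.

(* Both Cartan integers of [a] and [b] are positive; if neither is [1] then
   [dot (a - b) (a - b) <= 0], forcing [a = b]. *)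
Lemma rootB a b : a \in D -> b \in D -> 0 < dot a b -> a != b -> a - b \in D.
Proof.
move=> aD bD ab a_neq_b; case: HD => _ reflD cartan _.
have aa : 0 < dot a a by rewrite dot_gt0 root_neq0.
have bb : 0 < dot b b by rewrite dot_gt0 root_neq0.
have nab : 0 < 2 * dot a b / dot b b by rewrite divr_gt0 // mulr_gt0.
have nba : 0 < 2 * dot b a / dot a a by rewrite dotC divr_gt0 // mulr_gt0.
case: (intr_gt0_cases (cartan _ _ bD aD) nab) => [nab1|nab2].
  by have := reflD _ _ bD aD; rewrite /refl nab1 scale1r.
case: (intr_gt0_cases (cartan _ _ aD bD) nba) => [nba1|nba2].
  by have := rootN (reflD _ _ aD bD); rewrite /refl nba1 scale1r opprB.
exfalso; move/negP: a_neq_b; apply.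
rewrite -subr_eq0 -dot_eq0 eq_le dot_ge0 andbT dotBl !linearB /= (dotC b a).
rewrite ler_pdivlMr // in nab2; rewrite dotC ler_pdivlMr // in nba2.
lra.
Qed.

Lemma rootD a b : a \in D -> b \in D -> dot a b < 0 -> a != - b -> a + b \in D.
Proof.
move=> aD bD ab a_neq_Nb; rewrite -[b]opprK rootB ?rootN //.
by rewrite linearN oppr_gt0.
Qed.

Lemma root_subr_or_addr s g d : s \in D -> g \in D -> d \in D -> g != s -> d != - s ->
  0 < dot s (g - d) -> g - s \in D \/ d + s \in D.
Proof.
move=> sD gD dD g_neq_s d_neq_Ns; rewrite linearB subr_gt0 /= => sd_lt_sg.
have [gs_gt0|gs_le0] := ltP 0 (dot g s); first by left; apply: rootB.
by right; apply: rootD; rewrite // dotC (lt_le_trans sd_lt_sg) // dotC.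
Qed.

End RootSystem.

Section Base.
Variables (R : realFieldType) (n : nat) (D Sig : {fset 'rV[R]_n}).
Local Notation V := 'rV[R]_n.
Hypotheses (HD : is_root_system D) (HB : is_base D Sig).

Lemma base_subset : Sig `<=` D.
Proof. by case: HB. Qed.

Lemma base_lin_indep : lin_indep Sig.
Proof. by case: HB. Qed.

Lemma root_int_coord a : a \in D -> exists c : V -> int,
  a = \sum_(w <- Sig) (c w)%:~R *: w /\
  ({in Sig, forall w, 0 <= c w} \/ {in Sig, forall w, c w <= 0}).
Proof.
case: HB => _ _ signD /signD[] [c [Ea c_sign]]; exists c.
  by split=> //; left.
by split=> //; right.
Qed.

Lemma root_subr_int_coord a b : a \in D -> b \in D ->
  exists e : V -> int, a - b = \sum_(w <- Sig) (e w)%:~R *: w.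
Proof.
move=> /root_int_coord[ca [-> _]] /root_int_coord[cb [-> _]].
by exists (fun w => ca w - cb w); rewrite sum_intrB.
Qed.

Definition root_coset (L : {fset V}) (a : V) : pred V :=
  [pred g | (g \in D) && (g - a \in <<L>>%VS)].

Section Coset.
Variables (L : {fset V}) (a : V).
Hypotheses (LS : L `<=` Sig) (aD : a \in D) (aL : a \notin <<L>>%VS).

Lemma coset_notin_span g : g - a \in <<L>>%VS -> g \notin <<L>>%VS.
Proof. by move=> ga; apply: contra aL => gL; rewrite -(subKr g a) memvB. Qed.

(* The coordinates outside [L] are shared by the whole coset and not all zero. *)
Lemma coset_root_nonneg g : nonneg_int_comb Sig a ->
  g \in root_coset L a -> nonneg_int_comb Sig g.
Proof.
move=> [ca [Ea ca_ge0]] /andP[gD ga].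
have [cg [Eg [cg_ge0|cg_le0]]] := root_int_coord gD; first by exists cg.
have [s sS /andP[sL ca_neq0]] : exists2 s, s \in Sig & (s \notin L) && (ca s != 0).
  apply/hasP; apply: contraNT aL => /hasPn caL.
  rewrite Ea big_seq memv_suml // => s sS; have := caL s sS.
  rewrite negb_and !negbK => /orP[sL|/eqP->]; first by rewrite memvZ ?memv_span.
  by rewrite scale0r mem0v.
have Ega : g - a = \sum_(w <- Sig) (cg w - ca w)%:~R *: w by rewrite Eg Ea sum_intrB.
have /eqP := lin_indep_coord_notin base_lin_indep LS ga Ega sS sL.
rewrite intr_eq0 subr_eq0 => /eqP cgs.
by move: ca_neq0; rewrite eq_le ca_ge0 // andbT -cgs cg_le0.
Qed.

Variable Q : V -> Prop.
Hypothesis Q_step : forall g s, g \in root_coset L a -> g + s \in D -> s \in L ->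
  Q g <-> Q (g + s).

Lemma coset_descent g d s : g \in root_coset L a -> d \in root_coset L a ->
  s \in L -> 0 < dot s (g - d) ->
  exists g' d', [/\ g' \in root_coset L a, d' \in root_coset L a, g' - d' = g - d - s,
                    Q g <-> Q g' & Q d <-> Q d'].
Proof.
move=> gC dC sL sgd; have /andP[gD ga] := gC; have /andP[dD da] := dC.
have sD : s \in D by apply/(fsubsetP base_subset)/(fsubsetP LS).
have g_neq_s : g != s.
  by apply: contraNneq (coset_notin_span ga) => ->; rewrite memv_span.
have d_neq_Ns : d != - s.
  by apply: contraNneq (coset_notin_span da) => ->; rewrite memvN memv_span.
case: (root_subr_or_addr HD sD gD dD g_neq_s d_neq_Ns sgd) => [gsD|dsD].
  have gsC : g - s \in root_coset L a by rewrite inE gsD addrAC memvB // memv_span.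
  exists (g - s), d; split=> //; first by rewrite addrAC.
  by apply: iff_sym; have := @Q_step (g - s) s gsC; rewrite subrK; apply.
have dsC : d + s \in root_coset L a by rewrite inE dsD addrAC memvD // memv_span.
by exists g, (d + s); split=> //; [rewrite opprD addrA | apply: Q_step].
Qed.

(* Induction on the l1-distance between the integer coordinates of two roots;
   [coord_dot_gt0] picks the simple root along which [coset_descent] moves. *)
Lemma root_coset_connected b : b \in root_coset L a -> Q a <-> Q b.
Proof.
move=> /[dup] bC /andP[bD _].
suff coset_ind N g d (e : V -> int) : g \in root_coset L a -> d \in root_coset L a ->
    g - d = \sum_(w <- Sig) (e w)%:~R *: w ->
    (\sum_(w <- Sig) `|e w| <= N)%N -> Q g <-> Q d.
  have [e Ee] := root_subr_int_coord aD bD.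
  by apply: (coset_ind _ a b e); rewrite // inE aD subrr mem0v.
elim: N g d e => [|N IH] g d e gC dC Ee dist_e.
  suff -> : g = d by [].
  apply/eqP; rewrite -subr_eq0 Ee big1_seq // => w /andP[_ wS].
  move: dist_e; rewrite leqn0 sum_nat_seq_eq0 => /allP/(_ w wS) /=.
  by rewrite absz_eq0 => /eqP->; rewrite scale0r.
have [<-|g_neq_d] := eqVneq g d; first by [].
have gdL : g - d \in <<L>>%VS.
  have -> : g - d = (g - a) - (d - a) by rewrite opprB addrA subrK.
  by case/andP: gC => _ ga; case/andP: dC => _ da; apply: memvB.
have gd_neq0 : g - d != 0 by rewrite subr_eq0.
have [s sS es] := coord_dot_gt0 gd_neq0 Ee.
have sL : s \in L.
  apply: contraTT es => sL.
  by rewrite (lin_indep_coord_notin base_lin_indep LS gdL Ee sS sL) mul0r ltxx.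
have descend g' d' (e' : V -> int) : g' \in root_coset L a -> d' \in root_coset L a ->
    g' - d' = \sum_(w <- Sig) (e' w)%:~R *: w ->
    (\sum_(w <- Sig) `|e' w| <= N.+1)%N -> 0 < e' s -> 0 < dot s (g' - d') ->
    Q g' <-> Q d'.
  move=> g'C d'C Ee' dist_e' e's_gt0 /(coset_descent g'C d'C sL).
  move=> [g'' [d'' [g''C d''C Ed'' -> ->]]].
  apply: (IH _ _ (fun w => e' w - (w == s)%:R)) => //.
    by rewrite sum_intrB_delta // Ed'' Ee'.
  by rewrite -ltnS sum_abszB_delta.
have [es_lt0|es_gt0|es0] := ltgtP (e s) 0.
- rewrite nmulr_rgt0 ?ltrz0 // in es.
  symmetry; apply: (descend d g (fun w => - e w)); rewrite ?oppr_gt0 //.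
  + by rewrite -opprB Ee -sumrN; apply: eq_bigr => w _; rewrite rmorphN scaleNr.
  + by under eq_bigr do rewrite abszN.
  + by rewrite -opprB linearN oppr_gt0.
- by rewrite pmulr_rgt0 ?ltr0z // in es; apply: (descend g d e).
- by rewrite es0 mul0r ltxx in es.
Qed.

End Coset.

End Base.

Section Quotient.
Variables (R : realFieldType) (n : nat) (D Sig J0 : {fset 'rV[R]_n}).
Local Notation V := 'rV[R]_n.
Hypotheses (HD : is_root_system D) (HB : is_base D Sig) (J0Sig : J0 `<=` Sig).
Local Notation pi := (orthproj J0).
Local Notation S := (qbase Sig J0).

Lemma orthproj_J0_eq0 s : s \in J0 -> pi s = 0.
Proof. by move=> sJ0; apply/eqP; rewrite orthproj_eq0 memv_span. Qed.

Lemma qbase_inj : {in Sig `\` J0 &, injective pi}.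
Proof.
move=> s t; rewrite !in_fsetD => /andP[sJ0 sS] /andP[tJ0 tS] /eqP.
rewrite orthproj_eq => stJ0.
have Est : s - t = \sum_(w <- Sig) ((w == s)%:R - (w == t)%:R) *: w.
  by rewrite (eq_bigr _ (fun w _ => scalerBl _ _ _)) sumrB !sum_delta ?fset_uniq.
have := lin_indep_coord_notin (base_lin_indep HB) J0Sig stJ0 Est sS sJ0.
by rewrite eqxx; case: eqP => // _ /eqP; rewrite subr0 oner_eq0.
Qed.

Lemma sum_qbase (F : V -> V) : \sum_(k <- S) F k = \sum_(s <- Sig `\` J0) F (pi s).
Proof. by rewrite /qbase big_imfset //=; apply: qbase_inj. Qed.

Lemma qbase_lin_indep : lin_indep S.
Proof.
move=> e; rewrite sum_qbase => e0 _ /imfsetP[s /= sSJ0 ->].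
have /eqP : pi (\sum_(s <- Sig `\` J0) e (pi s) *: s) = 0.
  by rewrite linear_sum -[RHS]e0; apply: eq_bigr => w _; rewrite linearZ.
rewrite orthproj_eq0 => J0span; move: sSJ0; rewrite in_fsetD => /andP[sJ0 sS].
have := lin_indep_coord_notin (base_lin_indep HB) J0Sig J0span
  (sum_extend_fsubset _ (fsubsetDl Sig J0)) sS sJ0.
by rewrite in_fsetD sJ0 sS.
Qed.

Lemma nonneg_int_comb_orthproj x : nonneg_int_comb Sig x -> nonneg_int_comb S (pi x).
Proof.
move=> [c [-> c_ge0]].
exists (fun k => \sum_(s <- Sig `\` J0 | pi s == k) c s); split; last first.
  move=> k _; rewrite big_seq_cond sumr_ge0 // => s /andP[].
  by rewrite in_fsetD => /andP[_ /c_ge0].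
rewrite linear_sum -(big_fset_incl _ (fsubsetDl Sig J0)); last first.
  move=> w wS; rewrite in_fsetD wS andbT negbK => wJ0.
  by rewrite linearZ /= orthproj_J0_eq0 // scaler0.
rewrite (partition_big_imfset _ pi) /=; apply: eq_bigr => k _.
by rewrite rmorph_sum scaler_suml; apply: eq_bigr => s /eqP <-; rewrite linearZ.
Qed.

(* A root of [D] with nonpositive coordinates projects to minus a nonnegative
   combination of the independent [S], so it cannot project to a positive root. *)
Lemma qpos_lift al : qpos D Sig J0 al ->
  exists2 a, a \in D /\ nonneg_int_comb Sig a & pi a = al.
Proof.
move=> [[pa_neq0 [a [aD al_pa]]] [cal [Eal cal_ge0]]]; subst al.
have [c [Ea [c_ge0|c_le0]]] := root_int_coord HB aD.
  by exists a => //; split=> //; exists c.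
have [d [Ed d_ge0]] : nonneg_int_comb S (pi (- a)).
  apply: nonneg_int_comb_orthproj; exists (fun w => - c w); split.
    by rewrite Ea -sumrN; apply: eq_bigr => w _; rewrite rmorphN scaleNr.
  by move=> w wS; rewrite oppr_ge0 c_le0.
have /qbase_lin_indep cd0 : \sum_(k <- S) (cal k + d k)%:~R *: k = 0.
  rewrite (eq_bigr (fun k => (cal k)%:~R *: k + (d k)%:~R *: k)); last first.
    by move=> k _; rewrite rmorphD scalerDl.
  by rewrite big_split /= -Eal -Ed linearN addrN.
suff pa0 : pi a = 0 by rewrite pa0 eqxx in pa_neq0.
rewrite Eal big_seq big1 // => k kS.
have /eqP := cd0 k kS; rewrite intr_eq0 => /eqP cdk.
have -> : cal k = 0 by have := cal_ge0 k kS; have := d_ge0 k kS; lia.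
by rewrite scale0r.
Qed.


Definition fiber_closed (Phi : V -> Prop) (K : {fset V}) :=
  forall al be, qpos D Sig J0 al -> qpos D Sig J0 be ->
  orthproj K al = orthproj K be -> orthproj K al != 0 -> Phi al -> Phi be.

Lemma fiber_closed_iff Phi K al be : fiber_closed Phi K ->
  qpos D Sig J0 al -> qpos D Sig J0 be ->
  orthproj K al = orthproj K be -> orthproj K al != 0 -> Phi al <-> Phi be.
Proof. by move=> PhiK al_pos be_pos Kab Kal_neq0; split; apply: PhiK; rewrite // -Kab. Qed.

(* Roots of [Phi] in [span K] can always be put in [Y]; the rest is a union of
   fibres of [orthproj K], which is what [Theta] describes. *)
Lemma in_GenE Phi K : (forall v, Phi v -> qpos D Sig J0 v) ->
  in_Gen D Sig J0 Phi K <-> K `<=` S /\ fiber_closed Phi K.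
Proof.
move=> Phi_pos; split=> [[KS [Th [Y [_ [Y_span PhiE]]]]]|[KS PhiK]].
  split=> // al be al_pos be_pos Kab Kal_neq0 /PhiE[[_ Th_al]|/Y_span[_ /in_spanE alK]].
    by apply/PhiE; left; split; rewrite // -Kab.
  by rewrite orthproj_eq0 alK in Kal_neq0.
split=> //.
exists (fun v => v != 0 /\ exists2 al, Phi al & v = orthproj K al),
       (fun v => Phi v /\ in_span K v); split; [|split].
- by move=> v [v_neq0 [al /Phi_pos al_pos Ev]]; split=> //; exists al.
- by move=> v [/Phi_pos v_pos vK].
- move=> v; split=> [Phi_v|[[v_pos [Kv_neq0 [al Phi_al Kv]]]|[]//]].
    have [vK|vK] := boolP (v \in <<K>>%VS); [right|left].
      by split=> //; apply/in_spanE.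
    by split; [exact: Phi_pos | rewrite orthproj_eq0; split=> //; exists v].
  by apply: (PhiK al) => //; [exact: Phi_pos | rewrite -Kv].
Qed.

Lemma fiber_closedI Phi I J : I `<=` S -> J `<=` S ->
  fiber_closed Phi I -> fiber_closed Phi J -> fiber_closed Phi (I `&` J).
Proof.
move=> IS JS PhiI PhiJ al be al_pos be_pos /eqP; rewrite orthproj_eq => abIJ IJal_neq0.
have IJ_I : (<<I `&` J>> <= <<I>>)%VS by apply: sub_span; apply/fsubsetP/fsubsetIl.
have IJ_J : (<<I `&` J>> <= <<J>>)%VS by apply: sub_span; apply/fsubsetP/fsubsetIr.
have [Ial|Ial_neq0] := eqVneq (orthproj I al) 0; last first.
  by apply: PhiI => //; apply/eqP; rewrite orthproj_eq (subvP IJ_I).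
have [Jal|Jal_neq0] := eqVneq (orthproj J al) 0; last first.
  by apply: PhiJ => //; apply/eqP; rewrite orthproj_eq (subvP IJ_J).
move/eqP: Ial; move/eqP: Jal; rewrite !orthproj_eq0 => alJ alI.
by rewrite orthproj_eq0 (span_fsetI qbase_lin_indep IS JS alI alJ) in IJal_neq0.
Qed.

Definition parabolic_lift (U : {fset V}) : {fset V} :=
  [fset s in Sig | (s \in J0) || (pi s \in U)].

Lemma span_parabolic_lift U x : U `<=` S ->
  (x \in <<parabolic_lift U>>%VS) = (pi x \in <<U>>%VS).
Proof.
move=> US; apply/idP/idP => [/in_spanE[c ->]|xU].
  rewrite linear_sum big_seq memv_suml // => s; rewrite !inE linearZ /=.
  case/andP=> _ /orP[sJ0|sU]; last by rewrite memvZ // memv_span.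
  by rewrite orthproj_J0_eq0 // scaler0 mem0v.
have J0_L : (<<J0>> <= <<parabolic_lift U>>)%VS.
  by apply: sub_span => s sJ0; rewrite !inE sJ0 (fsubsetP J0Sig).
have U_L : (<<U>> <= <<parabolic_lift U>>)%VS.
  apply/span_subvP => k kU; have /imfsetP[s /=] := fsubsetP US k kU.
  rewrite in_fsetD => /andP[_ sS] Ek; rewrite Ek -[pi s](subKr s) memvB //.
    by rewrite memv_span // !inE sS -Ek kU orbT.
  exact: (subvP J0_L _ (orthproj_residual J0 s)).
rewrite -[x](subrK (pi x)) memvD //; first exact: (subvP J0_L _ (orthproj_residual J0 x)).
exact: (subvP U_L).
Qed.


Lemma fiber_closedU Phi I J : I `<=` S -> J `<=` S ->
  fiber_closed Phi I -> fiber_closed Phi J -> fiber_closed Phi (I `|` J).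
Proof.
move=> IS JS PhiI PhiJ al be al_pos be_pos Uab Ual_neq0 Phi_al.
set U := I `|` J; have US : U `<=` S by rewrite fsubUset IS JS.
set L := parabolic_lift U.
have LS : L `<=` Sig by apply/fsubsetP => s; rewrite !inE => /andP[].
have [a [aD a_pos] pa] := qpos_lift al_pos.
have [[_ [b [bD be_pb]]] _] := be_pos; subst be.
have aL : a \notin <<L>>%VS by rewrite span_parabolic_lift // pa -orthproj_eq0.
have bC : b \in root_coset D L a.
  by rewrite inE bD span_parabolic_lift // linearB /= pa -orthproj_eq Uab.
have coset_pos g : g \in root_coset D L a ->
    qpos D Sig J0 (pi g) /\ orthproj U (pi g) = orthproj U al.
  move=> gC; have Ug : orthproj U (pi g) = orthproj U al.
    case/andP: gC => _ ga; apply/eqP.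
    by rewrite orthproj_eq -pa -linearB -span_parabolic_lift.
  have pg_neq0 : pi g != 0.
    by apply: contra_neq Ual_neq0 => pg0; rewrite -Ug pg0 linear0.
  have /andP[gD _] := gC.
  split=> //; split; first by split=> //; exists g.
  exact: nonneg_int_comb_orthproj (coset_root_nonneg HB LS aL a_pos gC).
apply/(root_coset_connected HD HB LS aD aL (Q := fun g => Phi (pi g)) _ bC);
  last by rewrite pa.
move=> g s gC gsD sL.
have gsC : g + s \in root_coset D L a.
  by case/andP: gC => _ ga; rewrite inE gsD addrAC memvD // memv_span.
have [[g_pos Ug] [gs_pos _]] := (coset_pos g gC, coset_pos _ gsC).
have closed_step K : K `<=` U -> fiber_closed Phi K -> pi s \in K ->
    Phi (pi g) <-> Phi (pi (g + s)).
  move=> KU PhiK psK; apply: fiber_closed_iff PhiK g_pos gs_pos _ _.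
    by apply/eqP; rewrite orthproj_eq linearD /= opprD addrA subrr sub0r memvN memv_span.
  by apply: contra_neq Ual_neq0 => /(orthproj_eq0_sub KU); rewrite Ug.
move: sL; rewrite !inE => /andP[_ /orP[sJ0|/orP[psI|psJ]]].
- by rewrite linearD /= (orthproj_J0_eq0 sJ0) addr0.
- by apply: (closed_step I) => //; apply: fsubsetUl.
- by apply: (closed_step J) => //; apply: fsubsetUr.
Qed.

End Quotient.

Theorem proposition3p11 (R : realFieldType) (n : nat)
    (D Sig J0 : {fset 'rV[R]_n}) (Phi : 'rV[R]_n -> Prop)
    (I J : {fset 'rV[R]_n}) :
  is_root_system D -> is_base D Sig -> J0 `<` Sig ->
  (forall v, Phi v -> qpos D Sig J0 v) ->
  in_Gen D Sig J0 Phi I -> in_Gen D Sig J0 Phi J ->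
  in_Gen D Sig J0 Phi (I `|` J) /\ in_Gen D Sig J0 Phi (I `&` J).
Proof.
move=> HD HB /fproper_sub J0Sig Phi_pos GenI GenJ.
have [IS PhiI] := (in_GenE _ Phi_pos).1 GenI.
have [JS PhiJ] := (in_GenE _ Phi_pos).1 GenJ.
split; apply/(in_GenE _ Phi_pos); split.
- by rewrite fsubUset IS JS.
- exact: fiber_closedU.
- exact: fsubset_trans (fsubsetIl I J) IS.
- exact: fiber_closedI.
Qed.
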